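(* Let $q \ge 2$ and for $i = 1,\dots,q$ let $\Sigma_i \subset \mathbb{R}^{N_i}$ be nonempty; let $\Sigma = \Sigma_1 \times \cdots \times \Sigma_q$, equipped with the norm $\|(x_1,\dots,x_q)\|_2 = \sqrt{\sum_i \|x_i\|_2^2}$. For each $i$ let $P_i$ be a generalized projection onto $\Sigma_i$ minimizing $\beta_{\Sigma_i}$ over all generalized projections onto $\Sigma_i$, with $\beta_{\Sigma_i}(P_i) < \infty$. Define $P_\Sigma(z) = (P_1(z_1),\dots,P_q(z_q))$ (i.e., the set $P_1(z_1)\times\cdots\times P_q(z_q)$). Then $P_\Sigma$ minimizes $\beta_\Sigma$ over all generalized projections onto $\Sigma$.
   Context: A (set-valued) generalized projection onto $\Sigma \subset \mathbb{R}^N$ is a map $P$ assigning to each $z \in \mathbb{R}^N$ a nonempty subset $P(z) \subset \Sigma$. Restricted Lipschitz property: $P$ has the restricted $\beta$-Lipschitz property with respect to $\Sigma$ if for all $z \in \mathbb{R}^N$, all $x \in \Sigma$ and all $u \in P(z)$, $\|u - x\|_2 \le \beta\|z - x\|_2$; $\beta_\Sigma(P)$ denotes the smallest such $\beta$ (possibly $+\infty$). *)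

From HB Require Import structures.
From mathcomp Require Import all_boot all_order all_algebra.
From mathcomp Require Import all_classical all_reals ereal.
Set Implicit Arguments. Unset Strict Implicit. Unset Printing Implicit Defensive.
Import Order.TTheory GRing.Theory Num.Theory.
Local Open Scope classical_set_scope.
Local Open Scope ring_scope.

(* R^N is modelled as functions I -> R for a finite index type I
   (R^N = R^{'I_N}); Euclidean 2-norm. *)
Definition eucl_norm (R : realType) (I : finType) (v : I -> R) : R :=
  Num.sqrt (\sum_(i : I) v i ^+ 2).

Definition vsub (R : realType) (I : finType) (u v : I -> R) : I -> R :=
  fun i => u i - v i.

Definition gen_proj (R : realType) (I : finType) (Sig : set (I -> R))
  (P : (I -> R) -> set (I -> R)) : Prop :=
  forall z, P z !=set0 /\ P z `<=` Sig.

Definition restricted_lip (R : realType) (I : finType) (Sig : set (I -> R))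
  (P : (I -> R) -> set (I -> R)) (b : R) : Prop :=
  forall z x u, Sig x -> P z u ->
    eucl_norm (vsub u x) <= b * eucl_norm (vsub z x).

Definition beta (R : realType) (I : finType) (Sig : set (I -> R))
  (P : (I -> R) -> set (I -> R)) : \bar R :=
  ereal_inf [set b%:E | b in [set b : R | 0 <= b /\ restricted_lip Sig P b]].

Definition beta_optimal (R : realType) (I : finType) (Sig : set (I -> R))
  (P : (I -> R) -> set (I -> R)) : Prop :=
  gen_proj Sig P /\
  forall P', gen_proj Sig P' -> (beta Sig P <= beta Sig P')%E.

(* Product space R^{N_1} x ... x R^{N_q}, indexed by the pairs (i, j) with
   j < N i; its Euclidean norm is sqrt(sum_i ||x_i||^2). *)
Definition prod_idx (q : nat) (N : 'I_q -> nat) : finType :=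
  {i : 'I_q & 'I_(N i)}.

Definition comp (R : realType) (q : nat) (N : 'I_q -> nat)
  (x : @prod_idx q N -> R) (i : 'I_q) : 'I_(N i) -> R :=
  fun j => x (@Tagged 'I_q i (fun k => 'I_(N k)) j).

Definition prod_set (R : realType) (q : nat) (N : 'I_q -> nat)
  (Sig : forall i : 'I_q, set ('I_(N i) -> R)) : set (@prod_idx q N -> R) :=
  [set x | forall i, Sig i (@comp R q N x i)].

Definition prod_proj (R : realType) (q : nat) (N : 'I_q -> nat)
  (P : forall i : 'I_q, ('I_(N i) -> R) -> set ('I_(N i) -> R))
  (z : @prod_idx q N -> R) : set (@prod_idx q N -> R) :=
  [set u | forall i, P i (@comp R q N z i) (@comp R q N u i)].

(* Restricting a projection onto the product to one factor, with the other
   coordinates frozen at a point of the product, yields a projection onto that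
   factor with the same Lipschitz constant. By optimality each P_i is therefore
   b-Lipschitz whenever some projection onto the product is, and squared
   distances add up over the factors, so P_Sigma is b-Lipschitz too. *)
From Pilot Require Import Defs.
From HB Require Import structures.
From mathcomp Require Import all_boot all_order all_algebra.
From mathcomp Require Import all_classical all_reals ereal.
Import Order.TTheory GRing.Theory Num.Theory.
Set Implicit Arguments. Unset Strict Implicit.
Local Open Scope classical_set_scope.
Local Open Scope ring_scope.

Section RestrictedLipschitz.
Variables (R : realType) (I : finType).
Implicit Types (S : set (I -> R)) (P : (I -> R) -> set (I -> R)) (v : I -> R).

Definition sqnorm v : R := \sum_(i : I) v i ^+ 2.

Lemma sqnorm_ge0 v : 0 <= sqnorm v.
Proof. by apply: sumr_ge0 => i _; apply: sqr_ge0. Qed.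

Lemma eucl_norm_ge0 v : 0 <= eucl_norm v.
Proof. exact: sqrtr_ge0. Qed.

Lemma eucl_norm_sqr v : eucl_norm v ^+ 2 = sqnorm v.
Proof. by rewrite /eucl_norm sqr_sqrtr // sqnorm_ge0. Qed.

Lemma restricted_lipE S P b : 0 <= b ->
  restricted_lip S P b <->
  (forall z x u, S x -> P z u -> sqnorm (vsub u x) <= b ^+ 2 * sqnorm (vsub z x)).
Proof.
move=> b0; split=> lipP z x u Sx Pzu.
- rewrite -!eucl_norm_sqr -exprMn ler_sqr ?nnegrE ?mulr_ge0 ?eucl_norm_ge0 //.
  exact: lipP.
- rewrite /eucl_norm -[b]ger0_norm // -sqrtr_sqr -sqrtrM ?sqr_ge0 //.
  exact/ler_wsqrtr/lipP.
Qed.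

Lemma restricted_lip_le S P b c :
  b <= c -> restricted_lip S P b -> restricted_lip S P c.
Proof.
move=> bc lipP z x u Sx Pzu; apply: le_trans (lipP z x u Sx Pzu) _.
by rewrite ler_wpM2r ?eucl_norm_ge0.
Qed.

Lemma beta_le S P b : 0 <= b -> restricted_lip S P b -> (beta S P <= b%:E)%E.
Proof. by move=> b0 lipP; apply: ereal_inf_lbound; exists b. Qed.

Lemma restricted_lip_beta S P b : (beta S P <= b%:E)%E -> restricted_lip S P b.
Proof.
move=> betab.
have lipP c : b < c -> restricted_lip S P c.
  move=> bc; have /ereal_inf_ltP[_ [b' [_ lipb'] <-]] : (beta S P < c%:E)%E.
    by apply: le_lt_trans betab _; rewrite lte_fin.
  by rewrite lte_fin => /ltW b'c; apply: restricted_lip_le b'c lipb'.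
move=> z x u Sx Pzu; set n := eucl_norm (vsub z x).
have [n0|n_gt0] := eqVneq n 0.
  by have := lipP (b + 1) _ z x u Sx Pzu; rewrite -/n n0 !mulr0; apply; rewrite ltrDl.
have {}n_gt0 : 0 < n by rewrite lt0r n_gt0 eucl_norm_ge0.
apply/ler_addgt0Pr => e e0.
have := lipP (b + e / n) _ z x u Sx Pzu; rewrite -/n mulrDl divfK ?gt_eqF //.
by apply; rewrite ltrDl divr_gt0.
Qed.

End RestrictedLipschitz.

Local Notation component v i := (@Defs.comp _ _ _ v i).

Section ProductSpace.
Variables (R : realType) (q : nat) (N : 'I_q -> nat).
Implicit Types (u v : @prod_idx q N -> R).

Lemma sqnorm_prod v : sqnorm v = \sum_(i : 'I_q) sqnorm (component v i).
Proof.
rewrite /sqnorm (sig_big_dep xpredT (fun _ _ => true)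
  (fun i (j : 'I_(N i)) => component v i j ^+ 2)) /=.
by apply: eq_bigr => -[i j].
Qed.

Lemma sqnorm_comp_le v i : sqnorm (component v i) <= sqnorm v.
Proof.
rewrite [leRHS]sqnorm_prod [leRHS](bigD1 i) //= lerDl.
by apply: sumr_ge0 => k _; apply: sqnorm_ge0.
Qed.

Lemma comp_vsub u v i : component (vsub u v) i = vsub (component u i) (component v i).
Proof. by []. Qed.

Lemma prod_proj_gen_proj (Sig : forall i, set ('I_(N i) -> R))
    (P : forall i, ('I_(N i) -> R) -> set ('I_(N i) -> R)) :
  (forall i, gen_proj (Sig i) (P i)) -> gen_proj (prod_set Sig) (prod_proj P).
Proof.
move=> projP z; split=> [|u Pzu i]; last exact: (projP i (component z i)).2.
have Pz_pick i := cid (projP i (component z i)).1.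
exists (fun t => projT1 (Pz_pick (tag t)) (tagged t)) => i.
exact: projT2 (Pz_pick i).
Qed.

Lemma prod_proj_lip (Sig : forall i, set ('I_(N i) -> R))
    (P : forall i, ('I_(N i) -> R) -> set ('I_(N i) -> R)) b : 0 <= b ->
  (forall i, restricted_lip (Sig i) (P i) b) ->
  restricted_lip (prod_set Sig) (prod_proj P) b.
Proof.
move=> b0 lipP; apply/restricted_lipE => // z x u Sx Pzu.
rewrite !sqnorm_prod mulr_sumr; apply: ler_sum => i _; rewrite !comp_vsub.
by move/restricted_lipE: (lipP i); apply.
Qed.

Variable a : @prod_idx q N -> R.

(* [a] with its [i]-th component replaced by [w]; the cast transports the
   index along the proof of [tag t = i]. *)
Definition set_comp (i : 'I_q) (w : 'I_(N i) -> R) (t : @prod_idx q N) : R :=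
  match tag t =P i with
  | ReflectT h => w (cast_ord (congr1 N h) (tagged t))
  | ReflectF _ => a t
  end.

Lemma comp_set_comp i w : component (set_comp w) i = w.
Proof.
apply: funext => j; rewrite /Defs.comp /set_comp /=.
by case: (i =P i) => [h|//]; congr w; apply: val_inj.
Qed.

Lemma comp_set_comp_neq i k w : k != i -> component (@set_comp i w) k = component a k.
Proof.
move=> /negPf ki; apply: funext => j; rewrite /Defs.comp /set_comp /=.
by case: (k =P i) => // h; move: ki; rewrite {1}h eqxx.
Qed.

Lemma sqnorm_vsub_set_comp i w x :
  sqnorm (vsub (@set_comp i w) (set_comp x)) = sqnorm (vsub w x).
Proof.
rewrite sqnorm_prod (bigD1 i) //= comp_vsub !comp_set_comp big1 ?addr0 // => k ki.
rewrite comp_vsub !comp_set_comp_neq // /sqnorm big1 // => j _.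
by rewrite /vsub subrr expr0n.
Qed.

Definition slice_proj (P : (@prod_idx q N -> R) -> set (@prod_idx q N -> R))
    (i : 'I_q) (w : 'I_(N i) -> R) : set ('I_(N i) -> R) :=
  [set component u i | u in P (set_comp w)].
Arguments slice_proj P i w : clear implicits.

Lemma set_comp_prod_set (Sig : forall i, set ('I_(N i) -> R)) i x :
  prod_set Sig a -> Sig i x -> prod_set Sig (set_comp x).
Proof.
move=> Sa Sx k; have [->|ki] := eqVneq k i; first by rewrite comp_set_comp.
by rewrite comp_set_comp_neq.
Qed.

Lemma slice_proj_gen_proj (Sig : forall i, set ('I_(N i) -> R))
    (P : (@prod_idx q N -> R) -> set (@prod_idx q N -> R)) i :
  gen_proj (prod_set Sig) P -> gen_proj (Sig i) (slice_proj P i).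
Proof.
move=> projP w; have [[u Pu] PSig] := projP (set_comp w).
by split; [exists (component u i), u | move=> _ [v Pv <-]; apply: PSig].
Qed.

Lemma slice_proj_lip (Sig : forall i, set ('I_(N i) -> R))
    (P : (@prod_idx q N -> R) -> set (@prod_idx q N -> R)) i b :
  prod_set Sig a -> 0 <= b ->
  restricted_lip (prod_set Sig) P b -> restricted_lip (Sig i) (slice_proj P i) b.
Proof.
move=> Sa b0 /restricted_lipE-/(_ b0) lipP.
apply/restricted_lipE => // w x _ Sx [u Pu <-].
have := lipP _ _ _ (set_comp_prod_set Sa Sx) Pu.
rewrite sqnorm_vsub_set_comp; apply: le_trans.
by rewrite -{1}(comp_set_comp x) -comp_vsub sqnorm_comp_le.
Qed.

End ProductSpace.
Unset Implicit Arguments.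

Theorem corollary1 (R : realType) (q : nat) (hq : (2 <= q)%N)
  (N : 'I_q -> nat)
  (Sig : forall i : 'I_q, set ('I_(N i) -> R))
  (P : forall i : 'I_q, ('I_(N i) -> R) -> set ('I_(N i) -> R))
  (hSig : forall i, Sig i !=set0)
  (hopt : forall i, beta_optimal (Sig i) (P i))
  (hfin : forall i, (beta (Sig i) (P i) < +oo)%E) :
  beta_optimal (prod_set Sig) (prod_proj P).
Proof.
split; first by apply: prod_proj_gen_proj => i; case: (hopt i).
move=> P' projP'; apply/ereal_infP => _ [b [b0 lipP'] <-].
have Sig_pick i := cid (hSig i).
pose a : @prod_idx q N -> R := fun t => projT1 (Sig_pick (tag t)) (tagged t).
have Sa : prod_set Sig a by move=> i; exact: projT2 (Sig_pick i).
apply/beta_le/prod_proj_lip => // i; apply: restricted_lip_beta.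
have [_ optP] := hopt i.
have slice_lip := slice_proj_lip (i:=i) Sa b0 lipP'.
have slice_proj := slice_proj_gen_proj a (i:=i) projP'.
exact: le_trans (optP _ slice_proj) (beta_le b0 slice_lip).
Qed.
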